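(* Let $(X,\mathcal{O}(X))$ be a measurable space, $\mathcal{A}$ a unital $C^*$-algebra and $\mathcal{H}$ a Hilbert space with $\dim\mathcal{H}<\infty$. Then every $C^*$-extreme point of $I_{\mathcal{H}}(X,\mathcal{A})$ is an extreme point of the convex set $I_{\mathcal{H}}(X,\mathcal{A})$.
   Context: A CP instrument is a map $\mathcal{I}$ from $\mathcal{O}(X)$ to the completely positive maps $\mathcal{A}\to\mathcal{B}(\mathcal{H})$ such that for all $a\in\mathcal{A}$, $h,k\in\mathcal{H}$, $A\mapsto\langle h,\mathcal{I}(A)(a)k\rangle$ is a countably additive complex measure. It is UCP if $\mathcal{I}(X)(1_\mathcal{A})=I_\mathcal{H}$; $I_{\mathcal{H}}(X,\mathcal{A})$ is the (convex) set of UCP instruments. A $C^*$-convex combination of $\mathcal{I}$ is $\mathcal{I}(\cdot)=\sum_{i=1}^nT_i^*\mathcal{I}_i(\cdot)T_i$ with $\mathcal{I}_i\in I_{\mathcal{H}}(X,\mathcal{A})$, $T_i\in\mathcal{B}(\mathcal{H})$, $\sum T_i^*T_i=I_\mathcal{H}$; proper if all $T_i$ are invertible. $\mathcal{I}\in I_{\mathcal{H}}(X,\mathcal{A})$ is $C^*$-extreme if for every proper $C^*$-convex combination of $\mathcal{I}$ there are unitaries $U_i\in\mathcal{B}(\mathcal{H})$ with $\mathcal{I}_i(\cdot)=U_i^*\mathcal{I}(\cdot)U_i$ for all $i$. *)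

From HB Require Import structures.
From mathcomp Require Import all_boot all_order all_algebra.
From mathcomp Require Import complex.
From mathcomp Require Import classical_sets boolp reals measure.
Set Implicit Arguments. Unset Strict Implicit. Unset Printing Implicit Defensive.
Import Order.TTheory GRing.Theory Num.Theory.
Local Open Scope ring_scope.
Local Open Scope classical_set_scope.

Record cstar_axioms (R : realType) (A : algType R[i])
    (star : A -> A) (nrm : A -> R) : Prop := {
  star_add : forall a b : A, star (a + b) = star a + star b;
  star_scale : forall (c : R[i]) (a : A), star (c *: a) = (c^*)%C *: star a;
  star_mul : forall a b : A, star (a * b) = star b * star a;
  star_invol : forall a : A, star (star a) = a;
  nrm_ge0 : forall a : A, 0 <= nrm a;
  nrm_eq0 : forall a : A, nrm a = 0 -> a = 0;
  nrm_triangle : forall a b : A, nrm (a + b) <= nrm a + nrm b;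
  nrm_scale : forall (c : R[i]) (a : A), nrm (c *: a) = ComplexField.Normc.normc c * nrm a;
  nrm_submult : forall a b : A, nrm (a * b) <= nrm a * nrm b;
  cstar_identity : forall a : A, nrm (star a * a) = nrm a ^+ 2;
  nrm_complete : forall u : nat -> A,
    (forall e : R, 0 < e -> exists N : nat, forall p q : nat,
        (N <= p)%N -> (N <= q)%N -> nrm (u p - u q) < e) ->
    exists l : A, forall e : R, 0 < e -> exists N : nat, forall p : nat,
        (N <= p)%N -> nrm (u p - l) < e
}.

(* Hilbert space H = C^n (every finite-dimensional Hilbert space is unitarily
   isomorphic to some C^n), B(H) = 'M[R[i]]_n. *)
Definition adjm (R : realType) (p q : nat) (M : 'M[R[i]]_(p, q)) : 'M[R[i]]_(q, p) :=
  \matrix_(i, j) (M j i)^*%C.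

(* <h, k> = h^* k, linear in the second slot *)
Definition inner (R : realType) (n : nat) (h k : 'cV[R[i]]_n) : R[i] :=
  (adjm h *m k) 0 0.

Definition unitary (R : realType) (n : nat) (U : 'M[R[i]]_n) : Prop :=
  adjm U *m U = 1%:M /\ U *m adjm U = 1%:M.

(* Completely positive map A -> B(H): linear, and for every k the
   amplification M_k(A) -> M_k(B(H)) sends positive elements B^* B of M_k(A)
   to positive (semidefinite) block matrices. *)
Definition cp_map (R : realType) (A : algType R[i]) (star : A -> A) (n : nat)
    (phi : A -> 'M[R[i]]_n) : Prop :=
  (forall (c : R[i]) (a b : A), phi (c *: a + b) = c *: phi a + phi b) /\
  (forall (k : nat) (B : 'I_k -> 'I_k -> A) (xi : 'I_k -> 'cV[R[i]]_n),
     0 <= \sum_(i < k) \sum_(j < k)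
            inner (xi i) (phi (\sum_(l < k) star (B l i) * B l j) *m xi j)).

Definition csum_to (R : realType) (u : nat -> R[i]) (L : R[i]) : Prop :=
  forall e : R, 0 < e -> exists N : nat, forall p : nat,
    (N <= p)%N -> ComplexField.Normc.normc (\sum_(i < p) u i - L) < e.

(* CP instrument: only its values on measurable sets matter *)
Definition cp_instrument (R : realType) (d : measure_display) (X : measurableType d)
    (A : algType R[i]) (star : A -> A) (n : nat) (I : set X -> A -> 'M[R[i]]_n) : Prop :=
  (forall E : set X, measurable E -> cp_map star (I E)) /\
  (forall (a : A) (h k : 'cV[R[i]]_n) (F : nat -> set X),
     (forall i, measurable (F i)) -> trivIset setT F ->
     csum_to (fun i => inner h (I (F i) a *m k))
             (inner h (I (\bigcup_i F i) a *m k))).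

Definition ucp_instrument (R : realType) (d : measure_display) (X : measurableType d)
    (A : algType R[i]) (star : A -> A) (n : nat) (I : set X -> A -> 'M[R[i]]_n) : Prop :=
  cp_instrument star I /\ I setT 1 = 1%:M.

Definition inst_eq (R : realType) (d : measure_display) (X : measurableType d)
    (A : algType R[i]) (n : nat) (I J : set X -> A -> 'M[R[i]]_n) : Prop :=
  forall E : set X, measurable E -> forall a : A, I E a = J E a.

Definition proper_cstar_comb (R : realType) (d : measure_display) (X : measurableType d)
    (A : algType R[i]) (star : A -> A) (n : nat) (I : set X -> A -> 'M[R[i]]_n)
    (m : nat) (T : 'I_m -> 'M[R[i]]_n) (Is : 'I_m -> set X -> A -> 'M[R[i]]_n) : Prop :=
  (forall i, ucp_instrument star (Is i)) /\
  (forall i, T i \in unitmx) /\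
  \sum_(i < m) adjm (T i) *m T i = 1%:M /\
  inst_eq I (fun E a => \sum_(i < m) adjm (T i) *m Is i E a *m T i).

Definition cstar_extreme (R : realType) (d : measure_display) (X : measurableType d)
    (A : algType R[i]) (star : A -> A) (n : nat) (I : set X -> A -> 'M[R[i]]_n) : Prop :=
  ucp_instrument star I /\
  forall (m : nat) (T : 'I_m -> 'M[R[i]]_n) (Is : 'I_m -> set X -> A -> 'M[R[i]]_n),
    proper_cstar_comb star I T Is ->
    exists U : 'I_m -> 'M[R[i]]_n,
      forall i, unitary (U i) /\
                inst_eq (Is i) (fun E a => adjm (U i) *m I E a *m U i).

Definition extreme_instrument (R : realType) (d : measure_display) (X : measurableType d)
    (A : algType R[i]) (star : A -> A) (n : nat) (I : set X -> A -> 'M[R[i]]_n) : Prop :=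
  ucp_instrument star I /\
  forall (t : R) (I1 I2 : set X -> A -> 'M[R[i]]_n),
    0 < t < 1 -> ucp_instrument star I1 -> ucp_instrument star I2 ->
    inst_eq I (fun E a => (t%:C)%C *: I1 E a + ((1 - t)%:C)%C *: I2 E a) ->
    inst_eq I1 I /\ inst_eq I2 I.

From HB Require Import structures.
From mathcomp Require Import all_boot all_order all_algebra.
From mathcomp Require Import complex.
From mathcomp Require Import classical_sets boolp reals measure.
From mathcomp Require Import ring.
Set Implicit Arguments. Unset Strict Implicit. Unset Printing Implicit Defensive.
Import Order.TTheory GRing.Theory Num.Theory.
Local Open Scope ring_scope.

(* If I = t I1 + (1 - t) I2, then I = T1^* I1 T1 + T2^* I2 T2 with the invertible
   scalars T1 = sqrt t and T2 = sqrt (1 - t), a proper C*-convex combination. So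
   C*-extremality makes each Ij unitarily conjugate to I, and in particular
   Ij(E)(a) has the same Hilbert-Schmidt norm as I(E)(a). Since
     t |M1|^2 + (1 - t) |M2|^2 - |t M1 + (1 - t) M2|^2 = t (1 - t) |M1 - M2|^2,
   the Hilbert-Schmidt norm is strictly convex, which forces I1 = I2 = I. *)

Section HilbertSchmidt.
Variable R : realType.
Local Notation C := R[i].

Lemma adjmK p q (M : 'M[C]_(p, q)) : adjm (adjm M) = M.
Proof. by apply/matrixP=> i j; rewrite !mxE conjcK. Qed.

Lemma adjmM p q r (M : 'M[C]_(p, q)) (N : 'M[C]_(q, r)) :
  adjm (M *m N) = adjm N *m adjm M.
Proof.
apply/matrixP=> i j; rewrite !mxE rmorph_sum; apply: eq_bigr=> k _.
by rewrite !mxE rmorphM mulrC.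
Qed.

Lemma adjmD p q (M N : 'M[C]_(p, q)) : adjm (M + N) = adjm M + adjm N.
Proof. by apply/matrixP=> i j; rewrite !mxE rmorphD. Qed.

Lemma adjmZ p q (c : C) (M : 'M[C]_(p, q)) : adjm (c *: M) = (c^*)%C *: adjm M.
Proof. by apply/matrixP=> i j; rewrite !mxE rmorphM. Qed.

Lemma adjm_scalar n (c : C) : adjm (c%:M : 'M[C]_n) = (c^*)%C%:M.
Proof.
apply/matrixP=> i j; rewrite !mxE eq_sym.
by case: (i == j); rewrite ?mulr1n ?mulr0n ?conjc0.
Qed.

Lemma scalar_mx_conj n (c : C) (M : 'M[C]_n) :
  adjm c%:M *m M *m c%:M = ((c^*)%C * c) *: M.
Proof. by rewrite adjm_scalar mul_scalar_mx mul_mx_scalar scalerA mulrC. Qed.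

Definition frob2 n (M : 'M[C]_n) : C := \tr (adjm M *m M).

Lemma frob2_unitary_conj n (U M : 'M[C]_n) :
  unitary U -> frob2 (adjm U *m M *m U) = frob2 M.
Proof.
move=> [_ UUadj]; rewrite /frob2 !adjmM adjmK.
by rewrite -!mulmxA (mulmxA U) UUadj mul1mx mxtrace_mulC -!mulmxA UUadj mulmx1.
Qed.

Lemma frob2_eq0 n (M : 'M[C]_n) : frob2 M = 0 -> M = 0.
Proof.
have sqnorm_ge0 (c : C) : 0 <= (c^*)%C * c by rewrite mulrC mulcJ_ge0.
rewrite /frob2 /mxtrace => /eqP; rewrite psumr_eq0; last first.
  by move=> i _; rewrite mxE sumr_ge0 // => k _; rewrite mxE.
move=> /allP col0; apply/matrixP=> k i; rewrite mxE.
move: (col0 i (mem_index_enum i)); rewrite implyTb mxE psumr_eq0; last first.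
  by move=> l _; rewrite mxE.
move=> /allP /(_ k (mem_index_enum k)); rewrite implyTb mxE mulf_eq0 conjc_eq0.
by rewrite orbb => /eqP.
Qed.

Lemma frob2_addZ n (M N : 'M[C]_n) (s : R) :
  frob2 (M + s%:C%C *: N) =
  frob2 M + s%:C%C * (\tr (adjm N *m M) + \tr (adjm M *m N)) + s%:C%C ^+ 2 * frob2 N.
Proof.
rewrite /frob2 adjmD adjmZ conjc_real mulmxDl !mulmxDr -!scalemxAl -!scalemxAr.
by rewrite !mxtraceD !mxtraceZ; ring.
Qed.

Lemma frob2_convex_comb n (M1 M2 : 'M[C]_n) (t : R) :
  frob2 (t%:C%C *: M1 + (1 - t)%:C%C *: M2) + (t * (1 - t))%:C%C * frob2 (M1 - M2)
  = t%:C%C * frob2 M1 + (1 - t)%:C%C * frob2 M2.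
Proof.
have e1t : (1 - t)%:C%C = 1 - t%:C%C :> C by rewrite rmorphB rmorph1.
have et1t : (t * (1 - t))%:C%C = t%:C%C * (1 - t%:C%C) :> C by rewrite -e1t rmorphM.
have eM1 : M1 = M2 + 1%:C%C *: (M1 - M2) by rewrite rmorph1 scale1r addrC subrK.
have eM : t%:C%C *: M1 + (1 - t)%:C%C *: M2 = M2 + t%:C%C *: (M1 - M2).
  by rewrite e1t scalerBl scale1r scalerBr addrCA addrA.
by rewrite eM [in frob2 M1]eM1 !frob2_addZ e1t et1t rmorph1; ring.
Qed.

Lemma frob2_convex_eq n (M M1 M2 : 'M[C]_n) (t : R) : 0 < t < 1 ->
  frob2 M1 = frob2 M -> frob2 M2 = frob2 M ->
  M = t%:C%C *: M1 + (1 - t)%:C%C *: M2 -> M1 = M /\ M2 = M.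
Proof.
move=> /andP[t_gt0 t_lt1] eq1 eq2 eM.
have tt_neq0 : (t * (1 - t))%:C%C != 0 :> C.
  by rewrite fmorph_eq0 mulf_neq0 // gt_eqF // subr_gt0.
have M12 : M1 = M2.
  apply/eqP; rewrite -subr_eq0; apply/eqP/frob2_eq0.
  move: (frob2_convex_comb M1 M2 t).
  rewrite -eM eq1 eq2 -mulrDl -rmorphD subrKC rmorph1 mul1r.
  move=> /(canRL (addKr _)); rewrite addNr => /eqP.
  by rewrite mulf_eq0 (negbTE tt_neq0) => /eqP.
have -> : M = M1 by rewrite eM -M12 -scalerDl -rmorphD subrKC rmorph1 scale1r.
by rewrite M12.
Qed.

End HilbertSchmidt.

Section ConvexCombinations.
Variables (R : realType) (d : measure_display) (X : measurableType d).
Variables (A : algType R[i]) (star : A -> A) (n : nat).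
Local Notation C := R[i].

Lemma convex_comb_proper_cstar_comb (t : R) (I I1 I2 : set X -> A -> 'M[C]_n) :
  0 < t < 1 -> ucp_instrument star I1 -> ucp_instrument star I2 ->
  inst_eq I (fun E a => t%:C%C *: I1 E a + (1 - t)%:C%C *: I2 E a) ->
  proper_cstar_comb star I
    (tnth [tuple (Num.sqrt t)%:C%C%:M; (Num.sqrt (1 - t))%:C%C%:M])
    (tnth [tuple I1; I2]).
Proof.
move=> /andP[t_gt0 t_lt1] ucpI1 ucpI2 eqI.
have sqrt_sq s : 0 <= s -> ((Num.sqrt s)%:C^*)%C * (Num.sqrt s)%:C%C = s%:C%C :> C.
  by move=> s_ge0; rewrite conjc_real -rmorphM -expr2 sqr_sqrtr.
have [t_ge0 t'_ge0] : 0 <= t /\ 0 <= 1 - t by rewrite !ltW // subr_gt0.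
split; first by move=> -[[|[|//]] ?].
split.
  move=> -[[|[|//]] ?] /=;
  by rewrite unitmxE det_scalar unitfE expf_neq0 // fmorph_eq0 gt_eqF // sqrtr_gt0 ?subr_gt0.
split.
  rewrite !big_ord_recl big_ord0 addr0 /tnth /= !adjm_scalar -!scalar_mxM !sqrt_sq //.
  by rewrite -raddfD /= -rmorphD subrKC rmorph1.
move=> E mE a; rewrite eqI // !big_ord_recl big_ord0 addr0 /tnth /=.
by rewrite !scalar_mx_conj !sqrt_sq.
Qed.

End ConvexCombinations.

Theorem theorem3p17 (R : realType) (d : measure_display) (X : measurableType d)
    (A : algType R[i]) (star : A -> A) (nrm : A -> R)
    (hA : cstar_axioms star nrm) (n : nat) (I : set X -> A -> 'M[R[i]]_n) :
  cstar_extreme star I -> extreme_instrument star I.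
Proof.
move=> [ucpI cstarI]; split=> // t I1 I2 t01 ucpI1 ucpI2 eqI.
have [U HU] := cstarI _ _ _ (convex_comb_proper_cstar_comb t01 ucpI1 ucpI2 eqI).
move: (HU ord0) (HU (lift ord0 ord0)); rewrite /tnth /= => -[U0 eq1] [U1 eq2].
suff convE E : measurable E -> forall a, I1 E a = I E a /\ I2 E a = I E a.
  by split=> E mE a; case: (convE E mE a).
move=> mE a; apply: (frob2_convex_eq t01); last exact: eqI.
- by rewrite eq1 // frob2_unitary_conj.
- by rewrite eq2 // frob2_unitary_conj.
Qed.
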